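(* A Heyting algebra $\boldsymbol{A}$ validates a Sahlqvist quasiequation $\Phi$ if and only if it validates every formula in $\mathsf{A}(\Phi)$.
   Context: Formulas over variables with $\land,\lor,\to,\lnot,0,1$; a formula $\varphi$ is valid in a Heyting algebra if it satisfies $\varphi\approx1$. A variable occurrence is positive (negative) if the number of negations and implication antecedents in whose scope it lies is even (odd); positive/negative formulas have all occurrences so. Sahlqvist antecedent: built from variables, negative formulas, $0,1$ by $\land,\lor$. Sahlqvist implication: positive formula, or $\lnot\varphi$ with $\varphi$ a Sahlqvist antecedent, or $\varphi\to\psi$ with $\varphi$ a Sahlqvist antecedent and $\psi$ positive. A Sahlqvist quasiequation is $\Phi=\varphi_1\land y\le z\,\&\cdots\&\,\varphi_m\land y\le z\Longrightarrow y\le z$ (universally quantified), $y,z$ distinct variables not in the $\varphi_i$, each $\varphi_i$ built from Sahlqvist implications by $\land,\lor$, $a\le b$ meaning $a\land b\approx a$. For each formula $\varphi(x_1..x_n)$ and $k\ge1$, $\boldsymbol{\varphi}^k$ is the finite set of formulas: $\boldsymbol{x_m}^k=\{x_m^1..x_m^k\}$; $\boldsymbol{1}^k=\{x_1^1\to x_1^1\}$; $\boldsymbol{0}^k=\{x_1^1,x_1^1\to0\}$; $(\boldsymbol{\psi\land\chi})^k=\boldsymbol{\psi}^k\cup\boldsymbol{\chi}^k$; with $\boldsymbol{\psi}^k=\{\psi_1..\psi_p\}$, $\boldsymbol{\chi}^k=\{\chi_1..\chi_t\}$: $(\boldsymbol{\lnot\psi})^k=\{\psi_1\to(\cdots(\psi_p\to0)\cdots)\}$,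 $(\boldsymbol{\psi\to\chi})^k=\{\psi_1\to(\cdots(\psi_p\to\chi_j)\cdots):j\le t\}$, $(\boldsymbol{\psi\lor\chi})^k=\{\psi_i\lor\chi_j:i\le p,j\le t\}$. For finite $\Gamma=\{\gamma_1..\gamma_n\}$, $\Gamma\to\varphi$ denotes $\{\gamma_1\to(\cdots(\gamma_n\to\varphi)\cdots)\}$. $\mathsf{A}(\Phi)=\bigcup_{k\ge1}\big(((\boldsymbol{\varphi_1}^k\to y)\cup\cdots\cup(\boldsymbol{\varphi_m}^k\to y))\to y\big)$, $y$ a variable not occurring in the $\boldsymbol{\varphi_i}^k$. *)

From mathcomp Require Import all_boot.
From Stdlib Require List.

Set Implicit Arguments.
Unset Strict Implicit.
Unset Printing Implicit Defensive.

(* A bounded lattice with an implication satisfying residuation: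
   a /\ b <= c  <->  a <= b -> c,  where  a <= b  means  a /\ b = a. *)
Record heyting := Heyting {
  hcar :> Type;
  hmeet : hcar -> hcar -> hcar;
  hjoin : hcar -> hcar -> hcar;
  himp  : hcar -> hcar -> hcar;
  hbot  : hcar;
  htop  : hcar;
  hmeetC : forall a b, hmeet a b = hmeet b a;
  hmeetA : forall a b c, hmeet a (hmeet b c) = hmeet (hmeet a b) c;
  hjoinC : forall a b, hjoin a b = hjoin b a;
  hjoinA : forall a b c, hjoin a (hjoin b c) = hjoin (hjoin a b) c;
  hmeet_join_absorb : forall a b, hmeet a (hjoin a b) = a;
  hjoin_meet_absorb : forall a b, hjoin a (hmeet a b) = a;
  hmeet_top : forall a, hmeet a htop = a;
  hjoin_bot : forall a, hjoin a hbot = a;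
  hresiduation : forall a b c,
    hmeet (hmeet a b) c = hmeet a b <-> hmeet a (himp b c) = a
}.

Definition hle (A : heyting) (a b : A) : Prop := hmeet a b = a.

Inductive fml (V : Type) : Type :=
| FVar of V
| FBot
| FTop
| FAnd of fml V & fml V
| FOr  of fml V & fml V
| FImp of fml V & fml V
| FNeg of fml V.
Arguments FBot {V}.
Arguments FTop {V}.

Fixpoint feval (V : Type) (A : heyting) (v : V -> A) (f : fml V) : A :=
  match f with
  | FVar x => v x
  | FBot => hbot A
  | FTop => htop A
  | FAnd a b => hmeet (feval v a) (feval v b)
  | FOr a b => hjoin (feval v a) (feval v b)
  | FImp a b => himp (feval v a) (feval v b)
  | FNeg a => himp (feval v a) (hbot A)
  end.

Definition fvalid (V : Type) (A : heyting) (f : fml V) : Prop :=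
  forall v : V -> A, feval v f = htop A.

Fixpoint fvars (V : Type) (f : fml V) : list V :=
  match f with
  | FVar x => [:: x]
  | FBot | FTop => [::]
  | FAnd a b | FOr a b | FImp a b => fvars a ++ fvars b
  | FNeg a => fvars a
  end.

Fixpoint allpol (V : Type) (s : bool) (f : fml V) : bool :=
  match f with
  | FVar _ => s
  | FBot | FTop => true
  | FAnd a b | FOr a b => allpol s a && allpol s b
  | FImp a b => allpol (~~ s) a && allpol s b
  | FNeg a => allpol (~~ s) a
  end.

Definition positive_fml (V : Type) (f : fml V) : bool := allpol true f.
Definition negative_fml (V : Type) (f : fml V) : bool := allpol false f.

Inductive sahl_ante (V : Type) : fml V -> Prop :=
| SA_var x : sahl_ante (FVar x)
| SA_negf f : negative_fml f -> sahl_ante f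
| SA_bot : sahl_ante FBot
| SA_top : sahl_ante FTop
| SA_and a b : sahl_ante a -> sahl_ante b -> sahl_ante (FAnd a b)
| SA_or a b : sahl_ante a -> sahl_ante b -> sahl_ante (FOr a b).

Inductive sahl_impl (V : Type) : fml V -> Prop :=
| SI_pos f : positive_fml f -> sahl_impl f
| SI_neg f : sahl_ante f -> sahl_impl (FNeg f)
| SI_imp a b : sahl_ante a -> positive_fml b -> sahl_impl (FImp a b).

Inductive sahl_body (V : Type) : fml V -> Prop :=
| SB_impl f : sahl_impl f -> sahl_body f
| SB_and a b : sahl_body a -> sahl_body b -> sahl_body (FAnd a b)
| SB_or a b : sahl_body a -> sahl_body b -> sahl_body (FOr a b).

(* A Sahlqvist quasiequation  phi_1 /\ y <= z & ... & phi_m /\ y <= z ==> y <= z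
   is represented by the list phis = [phi_1; ...; phi_m] and the variables y, z.
   Its well-formedness conditions: *)
Definition sahlqvist_quasi (phis : list (fml nat)) (y z : nat) : Prop :=
  y <> z /\
  (forall phi, List.In phi phis ->
     sahl_body phi /\ ~ List.In y (fvars phi) /\ ~ List.In z (fvars phi)).

Definition validates_quasi (A : heyting) (phis : list (fml nat)) (y z : nat)
  : Prop :=
  forall v : nat -> A,
    (forall phi, List.In phi phis -> hle (hmeet (feval v phi) (v y)) (v z)) ->
    hle (v y) (v z).

(* Variables of the translated formulas are pairs (m, j): (m, j) with j >= 1
   stands for the copy x_m^j of the original variable x_m.  The pair (0, 1)
   plays the role of x_1^1 used for the constants, and (0, 0) (never a copy)
   is the fresh variable y of A(Phi).  Finite sets of formulas are
   represented by lists. *)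
Definition xvar (m j : nat) : fml (nat * nat) := FVar (m, j).

Definition impl_list (V : Type) (G : list (fml V)) (f : fml V) : fml V :=
  foldr (@FImp V) f G.

Fixpoint bold (k : nat) (f : fml nat) : list (fml (nat * nat)) :=
  match f with
  | FVar m => [seq xvar m j | j <- iota 1 k]
  | FTop => [:: FImp (xvar 0 1) (xvar 0 1)]
  | FBot => [:: xvar 0 1; FImp (xvar 0 1) FBot]
  | FAnd a b => bold k a ++ bold k b
  | FNeg a => [:: impl_list (bold k a) FBot]
  | FImp a b => [seq impl_list (bold k a) c | c <- bold k b]
  | FOr a b => [seq FOr p q | p <- bold k a, q <- bold k b]
  end.

Definition yA : fml (nat * nat) := FVar (0, 0).

Definition A_formula (phis : list (fml nat)) (k : nat) : fml (nat * nat) :=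
  impl_list [seq impl_list (bold k phi) yA | phi <- phis] yA.

(* Evaluated meet-wise, the translation commutes with the connectives: by
   distributivity of joins over finite meets and by currying, the meet of the
   values of bold phi^k under w is the value of phi under the valuation
   x_m |-> x_m^1 /\ ... /\ x_m^k, and every valuation u arises this way.
   Hence A(Phi) is valid iff  /\_i (phi_i(u) -> c) <= c  for all u and c.
   Since y and z are fresh, Phi holds iff the same inequality holds: take for
   y the largest b with phi_i(u) /\ b <= c for every i, namely
   /\_i (phi_i(u) -> c). *)

From mathcomp Require Import all_boot.
From Stdlib Require List.

Set Implicit Arguments.
Unset Strict Implicit.
Unset Printing Implicit Defensive.

Section HeytingTheory.

Variable A : heyting.
Implicit Types (a b c x : A) (s t : seq A).

Lemma hmeetxx a : hmeet a a = a.
Proof. by rewrite -{2}(hjoin_meet_absorb a a) hmeet_join_absorb. Qed.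

Lemma hle_refl a : hle a a.
Proof. exact: hmeetxx. Qed.

Lemma hle_trans a b c : hle a b -> hle b c -> hle a c.
Proof. by rewrite /hle => le_ab le_bc; rewrite -{1}le_ab -hmeetA le_bc le_ab. Qed.

Lemma hle_anti a b : hle a b -> hle b a -> a = b.
Proof. by rewrite /hle => le_ab le_ba; rewrite -{1}le_ab hmeetC. Qed.

Lemma hle_ext a b : (forall x, hle x a <-> hle x b) -> a = b.
Proof.
by move=> eq_le; apply: hle_anti; [apply/eq_le | apply/eq_le]; apply: hle_refl.
Qed.

Lemma hmeet1x a : hmeet (htop A) a = a.
Proof. by rewrite hmeetC hmeet_top. Qed.

Lemma hleIl a b : hle (hmeet a b) a.
Proof. by rewrite /hle hmeetC hmeetA hmeetxx. Qed.

Lemma hleIr a b : hle (hmeet a b) b.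
Proof. by rewrite /hle -hmeetA hmeetxx. Qed.

Lemma hlexI x a b : hle x (hmeet a b) <-> hle x a /\ hle x b.
Proof.
split=> [le_x_ab | [le_xa le_xb]]; last by rewrite /hle hmeetA le_xa le_xb.
by split; apply: hle_trans le_x_ab _; [apply: hleIl | apply: hleIr].
Qed.

Lemma hleEjoin a b : hle a b <-> hjoin a b = b.
Proof.
split=> [le_ab | <-]; last exact: hmeet_join_absorb.
by rewrite -{1}le_ab hjoinC hmeetC hjoin_meet_absorb.
Qed.

Lemma hleUl a b : hle a (hjoin a b).
Proof. exact: hmeet_join_absorb. Qed.

Lemma hleUr a b : hle b (hjoin a b).
Proof. by rewrite hjoinC; apply: hleUl. Qed.

Lemma hleUx a b c : hle (hjoin a b) c <-> hle a c /\ hle b c.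
Proof.
split=> [le_abc | [/hleEjoin le_ac /hleEjoin le_bc]].
  by split; apply: hle_trans le_abc; [apply: hleUl | apply: hleUr].
by apply/hleEjoin; rewrite -hjoinA le_bc le_ac.
Qed.

Lemma hle0x a : hle (hbot A) a.
Proof. by apply/hleEjoin; rewrite hjoinC hjoin_bot. Qed.

Lemma hlex1 a : hle a (htop A).
Proof. exact: hmeet_top. Qed.

Lemma hle_himp x a b : hle x (himp a b) <-> hle (hmeet x a) b.
Proof. by split=> /hresiduation. Qed.

Lemma himp_eq1 a b : himp a b = htop A <-> hle a b.
Proof.
split=> [eq_ab1 | le_ab].
  have le_1_ab : hle (htop A) (himp a b) by rewrite eq_ab1; apply: hle_refl.
  by move/hle_himp: le_1_ab; rewrite hmeet1x.
by apply: hle_anti; [apply: hlex1 | apply/hle_himp; rewrite hmeet1x].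
Qed.

Lemma himp1x a : himp (htop A) a = a.
Proof. by apply: hle_ext => x; rewrite hle_himp hmeet_top. Qed.

Lemma himpx1 a : himp a (htop A) = htop A.
Proof. exact/himp_eq1/hlex1. Qed.

Lemma himpxx a : himp a a = htop A.
Proof. exact/himp_eq1/hle_refl. Qed.

Lemma himp_curry a b c : himp a (himp b c) = himp (hmeet a b) c.
Proof. by apply: hle_ext => x; rewrite !hle_himp hmeetA. Qed.

Lemma himpIr a b c : hmeet (himp a b) (himp a c) = himp a (hmeet b c).
Proof. by apply: hle_ext => x; rewrite hlexI !hle_himp hlexI. Qed.

Lemma hmeet_himp0 a : hmeet a (himp a (hbot A)) = hbot A.
Proof.
by apply: hle_anti (hle0x _); rewrite hmeetC -hle_himp; apply: hle_refl.
Qed.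

(* [hmeet a] is a left adjoint, so it preserves joins. *)
Lemma hmeetUr a b c : hmeet a (hjoin b c) = hjoin (hmeet a b) (hmeet a c).
Proof.
apply: hle_anti.
  rewrite hmeetC -hle_himp; apply/hleUx; split; apply/hle_himp; rewrite hmeetC;
    [apply: hleUl | apply: hleUr].
apply/hleUx; split; apply/hlexI; split; try apply: hleIl;
  apply: hle_trans (hleIr _ _) _; [apply: hleUl | apply: hleUr].
Qed.

Lemma hjoinIr a b c : hjoin a (hmeet b c) = hmeet (hjoin a b) (hjoin a c).
Proof.
rewrite hmeetUr (hmeetC _ a) hmeet_join_absorb (hmeetC (hjoin a b) c) hmeetUr.
by rewrite hjoinA (hmeetC c a) hjoin_meet_absorb (hmeetC c b).
Qed.

Lemma hjoinIl a b c : hjoin (hmeet a b) c = hmeet (hjoin a c) (hjoin b c).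
Proof. by rewrite !(hjoinC _ c) hjoinIr. Qed.

Definition hmeets s : A := foldr (@hmeet A) (htop A) s.

Lemma hmeets_nil : hmeets [::] = htop A.
Proof. by []. Qed.

Lemma hmeets_cons a s : hmeets (a :: s) = hmeet a (hmeets s).
Proof. by []. Qed.

Lemma hmeets1 a : hmeets [:: a] = a.
Proof. exact: hmeet_top. Qed.

Lemma hmeets_cat s t : hmeets (s ++ t) = hmeet (hmeets s) (hmeets t).
Proof.
by elim: s => [|a s IHs]; rewrite ?hmeet1x // cat_cons !hmeets_cons IHs hmeetA.
Qed.

Lemma hlex_meets x s : hle x (hmeets s) <-> forall a, List.In a s -> hle x a.
Proof.
elim: s => [|b s IHs]; first by split=> // _; apply: hlex1.
rewrite hmeets_cons hlexI IHs.
split=> [[le_xb le_xs] a [<- | s_a] | le_x] //; first exact: le_xs.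
by split=> [|a s_a]; apply: le_x; [left | right].
Qed.

Lemma hmeets_const (T : Type) (r : seq T) a :
  0 < size r -> hmeets [seq a | _ <- r] = a.
Proof.
elim: r => [|x [|x' r] IHr] // _; first exact: hmeets1.
by rewrite map_cons hmeets_cons IHr // hmeetxx.
Qed.

Lemma himp_meets a s : hmeets [seq himp a b | b <- s] = himp a (hmeets s).
Proof.
elim: s => [|b s IHs]; first exact/esym/himpx1.
by rewrite map_cons !hmeets_cons IHs himpIr.
Qed.

Lemma hjoin_meetsr a t :
  0 < size t -> hmeets [seq hjoin a b | b <- t] = hjoin a (hmeets t).
Proof.
elim: t => [|b [|b' t] IHt] // _; first by rewrite [map _ _]/= !hmeets1.
by rewrite map_cons hmeets_cons IHt // (hmeets_cons b) hjoinIr.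
Qed.

Lemma hmeets_allpairs_join s t : 0 < size s -> 0 < size t ->
  hmeets [seq hjoin a b | a <- s, b <- t] = hjoin (hmeets s) (hmeets t).
Proof.
elim: s => [|a [|a' s] IHs] // _ t_gt0.
all: rewrite allpairs_cons hmeets_cat hjoin_meetsr //.
  by rewrite hmeets_nil hmeets1 hmeet_top.
by rewrite IHs // (hmeets_cons a) hjoinIl.
Qed.

End HeytingTheory.

Lemma eq_in_feval (V : Type) (A : heyting) (u u' : V -> A) (f : fml V) :
  (forall x, List.In x (fvars f) -> u x = u' x) -> feval u f = feval u' f.
Proof.
elim: f => [x| | |f IHf g IHg|f IHf g IHg|f IHf g IHg|f IHf] //= eq_uu';
  first by apply: eq_uu'; left.
all: by rewrite IHf ?IHg // => x fv_x; apply/eq_uu'/List.in_or_app; auto.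
Qed.

Section ListSemantics.

Variables (V : Type) (A : heyting) (w : V -> A).
Implicit Types (f : fml V) (G P Q : seq (fml V)).

Definition fmeet G : A := hmeets (map (feval w) G).

Lemma fmeet_cons f G : fmeet (f :: G) = hmeet (feval w f) (fmeet G).
Proof. by []. Qed.

Lemma fmeet1 f : fmeet [:: f] = feval w f.
Proof. exact: hmeets1. Qed.

Lemma fmeet_cat P Q : fmeet (P ++ Q) = hmeet (fmeet P) (fmeet Q).
Proof. by rewrite /fmeet map_cat hmeets_cat. Qed.

Lemma feval_impl_list G f : feval w (impl_list G f) = himp (fmeet G) (feval w f).
Proof.
elim: G => [|g G IHG]; first by rewrite /= himp1x.
by rewrite /= IHG fmeet_cons himp_curry.
Qed.

Lemma fmeet_impl_list P Q :
  fmeet [seq impl_list P g | g <- Q] = himp (fmeet P) (fmeet Q).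
Proof.
rewrite /fmeet -himp_meets -!map_comp; congr hmeets.
by apply: eq_map => g; apply: feval_impl_list.
Qed.

Lemma fmeet_or P Q : 0 < size P -> 0 < size Q ->
  fmeet [seq FOr p q | p <- P, q <- Q] = hjoin (fmeet P) (fmeet Q).
Proof.
move=> P_gt0 Q_gt0; rewrite /fmeet -hmeets_allpairs_join ?size_map //.
by rewrite allpairs_mapl allpairs_mapr map_allpairs.
Qed.

End ListSemantics.

Section Translation.

Variable A : heyting.
Implicit Types (w : nat * nat -> A) (u : nat -> A) (c : A).

Definition meet_copies w k m : A := fmeet w [seq xvar m j | j <- iota 1 k].

Lemma size_bold_gt0 k f : 0 < k -> 0 < size (bold k f).
Proof.
move=> k_gt0; elim: f => [m| | |f IHf g IHg|f IHf g IHg|f IHf g IHg|f IHf] //=.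
- by rewrite size_map size_iota.
- by rewrite size_cat addn_gt0 IHf.
- by rewrite size_allpairs muln_gt0 IHf IHg.
- by rewrite size_map.
Qed.

Lemma fmeet_bold w k f : 0 < k -> fmeet w (bold k f) = feval (meet_copies w k) f.
Proof.
move=> k_gt0; elim: f => [m| | |f IHf g IHg|f IHf g IHg|f IHf g IHg|f IHf] //=.
- by rewrite fmeet_cons fmeet1 hmeet_himp0.
- by rewrite fmeet1 /= himpxx.
- by rewrite fmeet_cat IHf IHg.
- by rewrite fmeet_or ?size_bold_gt0 // IHf IHg.
- by rewrite fmeet_impl_list IHf IHg.
- by rewrite fmeet1 feval_impl_list IHf.
Qed.

Lemma meet_copies_const w u k m :
  (forall j, 0 < j -> w (m, j) = u m) -> 0 < k -> meet_copies w k m = u m.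
Proof.
move=> w_mj k_gt0; rewrite /meet_copies /fmeet -map_comp.
have /eq_in_map -> : {in iota 1 k, feval w \o xvar m =1 fun=> u m}.
  by move=> j; rewrite mem_iota => /andP[/w_mj <- _].
by rewrite hmeets_const // size_iota.
Qed.

Definition premise_bound u c (phis : seq (fml nat)) : A :=
  hmeets [seq himp (feval u phi) c | phi <- phis].

Lemma hle_premise_bound u c phis b :
  hle b (premise_bound u c phis) <->
  forall phi, List.In phi phis -> hle (hmeet (feval u phi) b) c.
Proof.
rewrite hlex_meets.
split=> [le_b phi phis_phi | le_b _ /List.in_map_iff[phi [<- phis_phi]]].
  by rewrite hmeetC -hle_himp; apply/le_b/List.in_map_iff; exists phi.
by apply/hle_himp; rewrite hmeetC; apply: le_b.
Qed.

Lemma feval_A_formula w phis k : 0 < k ->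
  feval w (A_formula phis k) =
  himp (premise_bound (meet_copies w k) (w (0, 0)) phis) (w (0, 0)).
Proof.
move=> k_gt0; rewrite feval_impl_list /fmeet /premise_bound -map_comp.
congr (himp (hmeets _) _); apply: eq_map => phi.
by rewrite /= feval_impl_list fmeet_bold.
Qed.

End Translation.

Lemma validates_quasiE (A : heyting) (phis : seq (fml nat)) (y z : nat) :
  y <> z ->
  (forall phi, List.In phi phis ->
     ~ List.In y (fvars phi) /\ ~ List.In z (fvars phi)) ->
  validates_quasi A phis y z <->
  forall (u : nat -> A) (c : A), hle (premise_bound u c phis) c.
Proof.
move=> neq_yz fresh_yz; split=> [quasi_A u c | bound_le v premises]; last first.
  by apply: hle_trans (bound_le v (v z)); apply/hle_premise_bound.
pose v n := if n == y then premise_bound u c phis else if n == z then c else u n.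
have vy : v y = premise_bound u c phis by rewrite /v eqxx.
have vz : v z = c.
  by rewrite /v eqxx; case: eqP => // z_y; case: neq_yz.
have feval_v phi : List.In phi phis -> feval v phi = feval u phi.
  move=> /fresh_yz[y_phi z_phi]; apply: eq_in_feval => x fv_x; rewrite /v.
  by case: eqP => [x_y | _]; [subst x | case: eqP => [x_z | //]; subst x].
have := quasi_A v; rewrite vy vz; apply=> phi phis_phi; rewrite feval_v //.
by move: phi phis_phi; apply/hle_premise_bound/hle_refl.
Qed.

Lemma A_formula_validE (A : heyting) (phis : seq (fml nat)) (k : nat) :
  0 < k -> fvalid A (A_formula phis k) <->
  forall (u : nat -> A) (c : A), hle (premise_bound u c phis) c.
Proof.
move=> k_gt0; split=> [valid_A u c | bound_le w]; last first.
  by rewrite feval_A_formula //; apply/himp_eq1.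
pose w (p : nat * nat) := if p.2 == 0 then c else u p.1.
have copies_u m : meet_copies w k m = u m.
  by apply: meet_copies_const => // j; rewrite /w; case: j.
have -> :
    premise_bound u c phis = premise_bound (meet_copies w k) (w (0, 0)) phis.
  congr hmeets; apply: eq_map => phi.
  by rewrite (@eq_in_feval _ _ _ u) // => m _; apply: copies_u.
by apply/himp_eq1; rewrite -feval_A_formula.
Qed.

Theorem proposition9p5 (A : heyting) (phis : list (fml nat)) (y z : nat) :
  sahlqvist_quasi phis y z ->
  (validates_quasi A phis y z <->
   (forall k : nat, 1 <= k -> fvalid A (A_formula phis k))).
Proof.
case=> neq_yz sahl_phis.
have fresh_yz phi : List.In phi phis ->
    ~ List.In y (fvars phi) /\ ~ List.In z (fvars phi).
  by case/sahl_phis.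
rewrite validates_quasiE //; split=> [bound_le k k_gt0 | valid_A].
  exact/A_formula_validE.
exact/(A_formula_validE _ _ (ltn0Sn 0))/valid_A.
Qed.
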